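(* Let $n\ge 1$ and let $\alpha\in IS_n$ be a non-zero idempotent of rank $k$ (i.e. $|\operatorname{im}\alpha|=k$). Then the degree of the vertex $L_\alpha$ in $\mathcal{SP}_L(IS_n)$ equals $2^n-2^{n-k}-1$.
   Context: $IS_n$ is the set of all partial injective maps of an $n$-element set $X$, with composition written left to right ($\alpha\beta$ means first $\alpha$, then $\beta$); its zero is the empty map; its idempotents are the partial identities on subsets of $X$. For $a\in IS_n$, $S^1a=\{sa:s\in IS_n\}\cup\{a\}$. $\mathcal{P}_L(IS_n)$ is the simple graph on the non-empty partial injections with distinct $a,b$ adjacent iff $S^1a\cap S^1b$ contains a non-empty map. $L_a$ is the Green $\mathcal{L}$-class of $a$ ($a\,\mathcal{L}\,b$ iff $S^1a=S^1b$). $\mathcal{SP}_L(IS_n)$ is the simple graph with vertex set $\{L_a: a \text{ non-empty}\}$, distinct $L_a,L_b$ adjacent iff $a,b$ are adjacent in $\mathcal{P}_L(IS_n)$. *)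

From mathcomp Require Import all_boot.
Set Implicit Arguments. Unset Strict Implicit. Unset Printing Implicit Defensive.

(* Partial maps of X = 'I_n, as finite functions 'I_n -> option 'I_n
   (None = undefined). *)
Definition pinjb (n : nat) (f : {ffun 'I_n -> option 'I_n}) : bool :=
  [forall x, forall y, ((f x != None) && (f x == f y)) ==> (x == y)].

Definition IS (n : nat) := {f : {ffun 'I_n -> option 'I_n} | pinjb f}.

(* Left-to-right composition: (fcomp f g) = first f, then g. *)
Definition fcomp (n : nat) (f g : {ffun 'I_n -> option 'I_n}) :
  {ffun 'I_n -> option 'I_n} := [ffun x => obind g (f x)].

Definition pi_nonempty (n : nat) (a : IS n) : bool := [exists x, val a x != None].

Definition is_idem (n : nat) (a : IS n) : bool := fcomp (val a) (val a) == val a.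

Definition pi_im (n : nat) (a : IS n) : {set 'I_n} :=
  [set y | [exists x, val a x == Some y]].
Definition pi_rank (n : nat) (a : IS n) : nat := #|pi_im a|.

Definition S1 (n : nat) (a : IS n) : {set IS n} :=
  [set c : IS n | (c == a) || [exists s : IS n, val c == fcomp (val s) (val a)]].

Definition Lrel (n : nat) (a b : IS n) : bool := S1 a == S1 b.
Definition Lclass (n : nat) (a : IS n) : {set IS n} := [set b | Lrel a b].

Definition PLadj (n : nat) (a b : IS n) : bool :=
  [&& pi_nonempty a, pi_nonempty b, a != b &
     [exists c : IS n, [&& pi_nonempty c, c \in S1 a & c \in S1 b]]].

Definition SPverts (n : nat) : {set {set IS n}} :=
  [set Lclass a | a in [pred a : IS n | pi_nonempty a]].

Definition SPadj (n : nat) (C D : {set IS n}) : bool :=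
  [&& C \in SPverts n, D \in SPverts n, C != D &
     [exists a in C, exists b in D, PLadj a b]].

Definition SPdegree (n : nat) (C : {set IS n}) : nat :=
  #|[set D in SPverts n | SPadj C D]|.

(* In IS_n the principal left ideal S^1 a consists of the maps whose image is contained
   in im a, so L-classes are indexed by their images and two classes with images B and C
   are adjacent iff B <> C and B meets C (the partial identity on B :&: C lies in both
   ideals).  The neighbours of L_alpha therefore correspond to the subsets of X meeting
   im alpha other than im alpha itself; there are 2^n - 2^(n-k) - 1 of them. *)
From mathcomp Require Import all_boot.
Set Implicit Arguments. Unset Strict Implicit. Unset Printing Implicit Defensive.

Lemma card_sets_meeting (T : finType) (A : {set T}) :
  #|[set B : {set T} | B :&: A != set0]| = 2 ^ #|T| - 2 ^ (#|T| - #|A|).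
Proof.
have -> : [set B : {set T} | B :&: A != set0] = ~: powerset (~: A).
  by apply/setP => B; rewrite !inE setI_eq0 disjoints_subset.
rewrite cardsCs setCK card_powerset -cardsT -powersetT card_powerset cardsT.
by rewrite -(cardsC A) addKn.
Qed.

Section PartialInjections.

Variable n : nat.
Implicit Types (a b c s : IS n) (B : {set 'I_n}).

Definition pid_fun B : {ffun 'I_n -> option 'I_n} :=
  [ffun x => if x \in B then Some x else None].

Lemma pinjb_pid B : pinjb (pid_fun B).
Proof.
apply/forallP=> x; apply/forallP=> y; apply/implyP; rewrite !ffunE.
by case: (x \in B); case: (y \in B) => //= /andP[_ /eqP[->]].
Qed.

Definition pid B : IS n := exist _ (pid_fun B) (pinjb_pid B).

Lemma im_pid B : pi_im (pid B) = B.
Proof.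
apply/setP => y; rewrite inE; apply/existsP/idP => [[x]|By].
  by rewrite /= ffunE; case: ifP => // Bx /eqP[<-].
by exists y; rewrite /= ffunE By.
Qed.

Lemma pi_nonemptyE a : pi_nonempty a = (pi_im a != set0).
Proof.
apply/existsP/set0Pn => [[x]|[y]].
  case ax: (val a x) => [y|] // _; exists y.
  by rewrite inE; apply/existsP; exists x; rewrite ax.
by rewrite inE => /existsP[x /eqP ax]; exists x; rewrite ax.
Qed.

Lemma im_fcomp_sub s a c : val c = fcomp (val s) (val a) -> pi_im c \subset pi_im a.
Proof.
move=> cE; apply/subsetP => y; rewrite !inE => /existsP[x /eqP].
rewrite cE ffunE; case: (val s x) => [z|] //= azy.
by apply/existsP; exists z; rewrite azy.
Qed.

(* The factor [s] with [c = s a]: send [x] to an [a]-preimage of [c x]. *)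
Definition factor_fun a c : {ffun 'I_n -> option 'I_n} :=
  [ffun x => obind (fun y => [pick z | val a z == Some y]) (val c x)].

Lemma pinjb_factor a c : pinjb (factor_fun a c).
Proof.
apply/forallP=> x; apply/forallP=> x'; apply/implyP; rewrite !ffunE.
case cx: (val c x) => [y|] //=; case cx': (val c x') => [y'|] /=; last first.
  by case/andP => /negbTE ->.
case: pickP => [z /eqP az|] //=; case: pickP => [z' /eqP az'|] //=.
move=> /eqP[zz']; move: az'; rewrite -zz' az => -[yy'].
move: (valP c) => /forallP/(_ x)/forallP/(_ x')/implyP; apply.
by rewrite cx cx' yy' eqxx.
Qed.

Lemma factor_funK a c :
  pi_im c \subset pi_im a -> fcomp (factor_fun a c) (val a) = val c.
Proof.
move=> sca; apply/ffunP => x; rewrite !ffunE.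
case cx: (val c x) => [y|] //=.
have : y \in pi_im a by apply: (subsetP sca); rewrite inE; apply/existsP; exists x; rewrite cx.
rewrite inE => /existsP[z /eqP az].
by case: pickP => [z' /eqP //|/(_ z)]; rewrite az eqxx.
Qed.

Lemma mem_S1 a c : (c \in S1 a) = (pi_im c \subset pi_im a).
Proof.
rewrite inE; apply/idP/idP => [/orP[/eqP -> | /existsP[s /eqP]] | sca].
- exact: subxx.
- exact: im_fcomp_sub.
apply/orP; right; apply/existsP; exists (exist _ (factor_fun a c) (pinjb_factor a c)).
by rewrite /= factor_funK.
Qed.

Lemma LrelE a b : Lrel a b = (pi_im a == pi_im b).
Proof.
apply/eqP/eqP => [S1ab | imab]; last by apply/setP => c; rewrite !mem_S1 imab.
have S1_self c : c \in S1 c by rewrite inE eqxx.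
have := S1_self a; have := S1_self b; rewrite S1ab -{1}S1ab !mem_S1.
by move=> sba sab; apply/eqP; rewrite eqEsubset sab sba.
Qed.

Lemma eq_Lclass a b : (Lclass a == Lclass b) = (pi_im a == pi_im b).
Proof.
apply/eqP/eqP => [Lab | imab]; last by apply/setP => c; rewrite !inE !LrelE imab.
have : b \in Lclass a by rewrite Lab inE LrelE.
by rewrite inE LrelE => /eqP.
Qed.

Lemma Lclass_pid_inj : injective (fun B => Lclass (pid B)).
Proof. by move=> B C /eqP; rewrite eq_Lclass !im_pid => /eqP. Qed.

Lemma Lclass_SPverts a : pi_nonempty a -> Lclass a \in SPverts n.
Proof. by move=> na; apply/imsetP; exists a. Qed.

Lemma common_S1E a b :
  [exists c, [&& pi_nonempty c, c \in S1 a & c \in S1 b]] = (pi_im a :&: pi_im b != set0).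
Proof.
apply/existsP/idP => [[c] | meet].
  rewrite pi_nonemptyE !mem_S1 => /and3P[/set0Pn[y cy] ca cb].
  by apply/set0Pn; exists y; rewrite inE (subsetP ca _ cy) (subsetP cb _ cy).
exists (pid (pi_im a :&: pi_im b)).
by rewrite pi_nonemptyE !mem_S1 im_pid subsetIl subsetIr meet.
Qed.

Lemma SPadj_Lclass a b : pi_nonempty a -> pi_nonempty b ->
  SPadj (Lclass a) (Lclass b) = (pi_im a :&: pi_im b != set0) && (pi_im a != pi_im b).
Proof.
move=> na nb; rewrite /SPadj !Lclass_SPverts //= eq_Lclass andbC.
have [-> | neq] := eqVneq (pi_im a) (pi_im b); first by rewrite !andbF.
rewrite !andbT; apply/existsP/idP => [[a' /andP[aa' /existsP[b' /andP[bb']]]] | meet].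
  rewrite inE LrelE in aa'; rewrite inE LrelE in bb'.
  by case/and4P => _ _ _; rewrite common_S1E -(eqP aa') -(eqP bb').
exists a; rewrite inE LrelE eqxx /=; apply/existsP; exists b.
rewrite inE LrelE eqxx /= /PLadj na nb common_S1E meet andbT /=.
by apply: contraNneq neq => ->.
Qed.

Lemma SPneighbours_Lclass a : pi_nonempty a ->
  [set D in SPverts n | SPadj (Lclass a) D] =
  [set Lclass (pid B) | B in [set B | (B :&: pi_im a != set0) && (B != pi_im a)]].
Proof.
move=> na; apply/setP => D; rewrite inE; apply/andP/imsetP => [[/imsetP[b nb ->]] | [B]].
  rewrite inE in nb; rewrite SPadj_Lclass // => /andP[meet neq].
  exists (pi_im b); last by apply/eqP; rewrite eq_Lclass im_pid.
  by rewrite inE setIC meet eq_sym neq.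
rewrite inE => /andP[meet neq] ->.
have nB : pi_nonempty (pid B).
  by rewrite pi_nonemptyE im_pid; apply: contraNneq meet => ->; rewrite set0I.
by rewrite Lclass_SPverts // SPadj_Lclass // im_pid setIC meet eq_sym neq.
Qed.

End PartialInjections.

Theorem mainTheorem14 (n : nat) (alpha : IS n) :
  1 <= n -> pi_nonempty alpha -> is_idem alpha ->
  SPdegree (Lclass alpha) = 2 ^ n - 2 ^ (n - pi_rank alpha) - 1.
Proof.
move=> _ nalpha _; rewrite /SPdegree SPneighbours_Lclass // card_imset; last first.
  exact: Lclass_pid_inj.
rewrite /pi_rank; set A := pi_im alpha; set Q := [set B : {set 'I_n} | B :&: A != set0].
have -> : [set B | (B :&: A != set0) && (B != A)] = Q :\ A.
  by apply/setP => B; rewrite !inE andbC.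
have QA : A \in Q by rewrite inE setIid -pi_nonemptyE.
by move: (cardsD1 A Q); rewrite QA card_sets_meeting card_ord => ->; rewrite add1n subn1.
Qed.
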